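(* Let $\Pi=\{321,312,123\}$ (consecutive patterns). For $n\ge 2$ let $I_n^{2}(q)=\sum q^{\mathrm{inv}(\pi)}$, the sum over those $\pi\in\mathrm{Av}_n(\Pi)$ with $\pi_{n-1}>\pi_n$ and either $n=2$ or $\pi_{n-2}<\pi_{n-1}$. Then $I_2^{2}(q)=q$, $I_3^{2}(q)=q+q^2$, $$I_n^{2}(q)=(q+q^2+\cdots+q^{n-1})\,I_{n-2}^{2}(q)\quad (n\ge 4),$$ and $I_n(\Pi;q)=I_{n-1}^{2}(q)+I_n^{2}(q)$ for $n\ge 3$. In particular, for $n\ge 4$, $$I_n(\Pi;q)=I_{n-1}^{2}(q)+(q+q^2+\cdots+q^{n-1})\,I_{n-2}^{2}(q).$$
   Context: For $\sigma\in S_3$ and $\pi=\pi_1\cdots\pi_n\in S_n$, $\pi$ contains the consecutive pattern $\sigma$ if there is an index $i$ with $1\le i\le n-2$ such that $\pi_i\pi_{i+1}\pi_{i+2}$ is order-isomorphic to $\sigma$; otherwise $\pi$ avoids $\sigma$. $\mathrm{Av}_n(\Pi)$ is the set of $\pi\in S_n$ avoiding every pattern in $\Pi$. $\mathrm{inv}(\pi)=\#\{(i,j):i<j,\ \pi_i>\pi_j\}$ and $I_n(\Pi;q)=\sum_{\pi\in\mathrm{Av}_n(\Pi)}q^{\mathrm{inv}(\pi)}$. Thus $I_n^{2}$ collects the avoiders whose final maximal decreasing run has length exactly $2$. *)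

From HB Require Import structures.
From mathcomp Require Import all_boot all_order all_algebra all_fingroup.
Set Implicit Arguments. Unset Strict Implicit. Unset Printing Implicit Defensive.
Import GRing.Theory.

(* One-line notation of a permutation s of {0..n-1}: [s(0); ...; s(n-1)]
   (values are 0-based; only relative order matters). *)
Definition word (n : nat) (s : 'S_n) : seq nat := [seq val (s i) | i <- enum 'I_n].

Definition order_iso (u v : seq nat) : bool :=
  (size u == size v) &&
  [forall j : 'I_(size u), forall k : 'I_(size u),
     (nth 0 u j < nth 0 u k) == (nth 0 v j < nth 0 v k)].

Definition contains_consec (w sigma : seq nat) : bool :=
  has (fun i => (i + size sigma <= size w) &&
                order_iso (take (size sigma) (drop i w)) sigma)
      (iota 0 (size w).+1).

Definition avoids_all (w : seq nat) (Pi : seq (seq nat)) : bool :=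
  all (fun sigma => ~~ contains_consec w sigma) Pi.

Definition Pi : seq (seq nat) := [:: [:: 3; 2; 1]; [:: 3; 1; 2]; [:: 1; 2; 3]].

Definition inv_w (w : seq nat) : nat :=
  \sum_(i < size w) \sum_(j < size w | i < j) (nth 0 w j < nth 0 w i).

Definition inv (n : nat) (s : 'S_n) : nat := inv_w (word s).

Definition I_Pi (n : nat) : {poly int} :=
  \sum_(s : 'S_n | avoids_all (word s) Pi) 'X^(inv s).

(* I_n^2(q): avoiders with pi_{n-1} > pi_n and (n = 2 or pi_{n-2} < pi_{n-1})
   (1-based in the paper; 0-based nth below) *)
Definition last_run2 (n : nat) (w : seq nat) : bool :=
  (nth 0 w (n - 1) < nth 0 w (n - 2)) &&
  ((n == 2) || (nth 0 w (n - 3) < nth 0 w (n - 2))).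

Definition I2 (n : nat) : {poly int} :=
  \sum_(s : 'S_n | avoids_all (word s) Pi && last_run2 n (word s)) 'X^(inv s).

(* A window xyz avoids 321, 312 and 123 iff either y is its largest entry or
   x > y < z with z largest.  Hence the maximum of an avoider of length m >= 2
   sits at position m-2 when the word ends with a descent and at position m-1
   otherwise.  Build a permutation of length m+1 by appending a last value j
   and shifting the entries >= j up: the result avoids the patterns iff j = m
   after a final descent (it then ends with an ascent) or j < m after a final
   ascent (it then ends with a descent); j adds m - j inversions.  So, writing
   Iend m b for the generating function of the avoiders of length m ending
   (b = true) or not in a descent,
     Iend (m+1) true = (q + ... + q^m) Iend m false,  Iend (m+1) false = Iend m true,
   and I_m^2 = Iend m true, I_n = Iend n true + Iend n false. *)

From Pilot Require Import Defs.
From HB Require Import structures.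
From mathcomp Require Import all_boot all_order all_algebra all_fingroup.
From mathcomp Require Import zify.
Import GRing.Theory.
Set Implicit Arguments. Unset Strict Implicit. Unset Printing Implicit Defensive.

Lemma order_iso3 x y z a b c : order_iso [:: x; y; z] [:: a; b; c] =
  [&& (x < y) == (a < b), (x < z) == (a < c), (y < x) == (b < a),
      (y < z) == (b < c), (z < x) == (c < a) & (z < y) == (c < b)].
Proof.
rewrite /order_iso /=; apply/forallP/idP => [H | ].
  have h (j k : 'I_3) := forallP (H j) k.
  have := h (inord 0) (inord 1); have := h (inord 0) (inord 2);
  have := h (inord 1) (inord 0); have := h (inord 1) (inord 2);
  have := h (inord 2) (inord 0); have := h (inord 2) (inord 1).
  by rewrite !inordK //= => -> -> -> -> -> ->.
case/and5P=> H1 H2 H3 H4 /andP[H5 H6] j; apply/forallP => k.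
case: j => [[|[|[|j]]] Hj] //=; case: k => [[|[|[|k]]] Hk] //=; by rewrite !ltnn.
Qed.

Definition triple_ok (x y z : nat) : bool :=
  all (fun sigma => ~~ order_iso [:: x; y; z] sigma) Pi.

Lemma triple_ok_mono f x y z : {mono f : u v / u < v} ->
  triple_ok (f x) (f y) (f z) = triple_ok x y z.
Proof. by move=> fmono; rewrite /triple_ok /= !order_iso3 !fmono. Qed.

Lemma triple_okE x y z : uniq [:: x; y; z] ->
  triple_ok x y z = (x < y) && (z < y) || (y < x < z).
Proof.
rewrite /= !inE negb_or => /and3P[/andP[/eqP Hxy /eqP Hxz] /eqP Hyz _].
rewrite /triple_ok /= !order_iso3 /=.
by case: (ltngtP x y) => ?; case: (ltngtP y z) => ?; case: (ltngtP x z) => ? //=; lia.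
Qed.

Lemma contains_consec3 w sigma : size sigma = 3 ->
  contains_consec w sigma =
  has (fun i => order_iso [:: nth 0 w i; nth 0 w i.+1; nth 0 w i.+2] sigma)
      (iota 0 (size w - 2)).
Proof.
move=> sigma3; rewrite /contains_consec sigma3.
rewrite -(subnKC (_ : size w - 2 <= (size w).+1)) ?iotaD ?has_cat /=; last by lia.
rewrite [X in _ || X](_ : _ = false) ?orbF.
  apply: eq_in_has => i; rewrite mem_iota => /andP[_ lti].
  have le3 : i + 3 <= size w by lia.
  by rewrite le3 -(map_nth_iota 0) //; lia.
by apply/hasPn => i; rewrite mem_iota => /andP[lei _]; apply/nandP; left; lia.
Qed.

Lemma avoids_PiE w : avoids_all w Pi =
  all (fun i => triple_ok (nth 0 w i) (nth 0 w i.+1) (nth 0 w i.+2))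
      (iota 0 (size w - 2)).
Proof.
rewrite /avoids_all /triple_ok /= !contains_consec3 // andbT -!all_predC -!all_predI.
by apply: eq_all => i /=; rewrite andbT.
Qed.

Lemma avoids_Pi_window w i : avoids_all w Pi -> i.+2 < size w ->
  triple_ok (nth 0 w i) (nth 0 w i.+1) (nth 0 w i.+2).
Proof. by rewrite avoids_PiE => /allP avw lti; apply: avw; rewrite mem_iota; lia. Qed.

Lemma avoids_Pi_map f w : {mono f : x y / x < y} ->
  avoids_all (map f w) Pi = avoids_all w Pi.
Proof.
move=> fmono; rewrite !avoids_PiE size_map; apply: eq_in_all => i.
by rewrite mem_iota => /andP[_ lti]; rewrite !(nth_map 0) ?(triple_ok_mono _ _ _ fmono); lia.
Qed.

Lemma avoids_Pi_rcons w x : 2 <= size w ->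
  avoids_all (rcons w x) Pi =
  avoids_all w Pi && triple_ok (nth 0 w (size w - 2)) (nth 0 w (size w - 1)) x.
Proof.
move=> w2; rewrite !avoids_PiE size_rcons.
rewrite (_ : (size w).+1 - 2 = size w - 2 + 1); last by lia.
rewrite iotaD all_cat /= andbT add0n; congr andb.
  apply: eq_in_all => i; rewrite mem_iota => /andP[_ lti].
  by rewrite !nth_rcons !ifT //; lia.
rewrite (_ : (size w - 2).+2 = size w); last by lia.
rewrite (_ : (size w - 2).+1 = size w - 1); last by lia.
by rewrite !nth_rcons ltnn eqxx /= !ifT //; lia.
Qed.

Lemma inv_w_cons x w : inv_w (x :: w) = count (fun y => y < x) w + inv_w w.
Proof.
rewrite /inv_w /= big_ord_recl /=; congr addn.
  rewrite big_mkcond big_ord_recl /= add0n -sum1_count (big_nth 0) big_mkord [RHS]big_mkcond.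
  by apply: eq_bigr => i _; case: ltnP.
apply: eq_bigr => i _.
by rewrite big_mkcond big_ord_recl /= add0n [RHS]big_mkcond.
Qed.

Lemma inv_w_rcons w x : inv_w (rcons w x) = inv_w w + count (fun y => x < y) w.
Proof.
elim: w => [|y w IH]; first by rewrite /= inv_w_cons /inv_w big_ord0.
by rewrite rcons_cons !inv_w_cons IH -cats1 count_cat /=; lia.
Qed.

Lemma inv_w_map f w : {mono f : x y / x < y} -> inv_w (map f w) = inv_w w.
Proof.
move=> fmono; elim: w => [|x w IH] //=.
by rewrite !inv_w_cons IH count_map; congr addn; apply: eq_count => y /=; rewrite fmono.
Qed.

Lemma ltn_bump h : {mono bump h : x y / x < y}.
Proof. by move=> x y; rewrite !ltnNge leq_bump2. Qed.

Section Word.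
Variables (m : nat) (t : 'S_m).

Lemma size_word : size (word t) = m.
Proof. by rewrite /word size_map size_enum_ord. Qed.

Lemma uniq_word : uniq (word t).
Proof. by rewrite /word map_inj_uniq ?enum_uniq // => a b /val_inj /perm_inj. Qed.

Lemma perm_word_iota : perm_eq (word t) (iota 0 m).
Proof.
rewrite uniq_perm ?uniq_word ?iota_uniq // => k; rewrite mem_iota /=.
apply/mapP/idP => [[i _ ->] | ltkm]; first exact: ltn_ord.
by exists (t^-1 (Ordinal ltkm))%g; rewrite ?mem_enum ?permKV.
Qed.

Lemma nth_word_ltn i : i < m -> nth 0 (word t) i < m.
Proof.
move=> ltim; have := mem_nth 0 (_ : i < size (word t)).
by rewrite (perm_mem perm_word_iota) mem_iota size_word => /(_ ltim).
Qed.

Lemma count_word_geq j : j <= m -> count (fun y => j <= y) (word t) = m - j.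
Proof.
move=> lejm; rewrite (seq.permP perm_word_iota).
rewrite (_ : iota 0 m = iota 0 j ++ iota j (m - j)) ?count_cat; last by rewrite -iotaD subnKC.
rewrite (eq_in_count (a2 := pred0)) ?count_pred0 => [|y]; last by rewrite mem_iota /=; lia.
rewrite (eq_in_count (a2 := predT)) ?count_predT ?size_iota // => y.
by rewrite mem_iota /=; lia.
Qed.

End Word.

Lemma word_lift m (t : 'S_m) (j : 'I_m.+1) :
  word (lift_perm ord_max j t) = rcons (map (bump j) (word t)) j.
Proof.
rewrite /word enum_ordSr map_rcons lift_perm_id -!map_comp; congr rcons.
apply: eq_map => k /=.
rewrite (_ : widen_ord (leqnSn m) k = lift ord_max k) ?lift_perm_lift //.
by apply: val_inj; rewrite /= /bump leqNgt ltn_ord.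
Qed.

Lemma inv_lift m (t : 'S_m) (j : 'I_m.+1) :
  Defs.inv (lift_perm ord_max j t) = Defs.inv t + (m - j).
Proof.
rewrite /Defs.inv word_lift inv_w_rcons (inv_w_map _ (ltn_bump j)) count_map.
have lejm : j <= m by rewrite -ltnS.
rewrite -(count_word_geq t lejm); congr addn.
by apply: eq_count => y /=; rewrite /bump; case: leqP; lia.
Qed.

Section UnliftPerm.
Variable n : nat.
Implicit Types (i j : 'I_n.+1) (s : 'S_n.+1) (t : 'S_n).

Definition unlift_perm_fun i s k := odflt k (unlift (s i) (s (lift i k))).

Lemma lift_unlift_perm_fun i s k : lift (s i) (unlift_perm_fun i s k) = s (lift i k).
Proof.
rewrite /unlift_perm_fun; have:= neq_lift i k.
by rewrite -(can_eq (permK s)) => /unlift_some[] ? ? ->.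
Qed.

Lemma unlift_perm_fun_inj i s : injective (unlift_perm_fun i s).
Proof.
apply: can_inj (unlift_perm_fun (s i) s^-1%g) _ => k.
by rewrite {1}/unlift_perm_fun lift_unlift_perm_fun !permK liftK.
Qed.

Definition unlift_perm i s : 'S_n := perm (@unlift_perm_fun_inj i s).

Lemma unlift_permK i s : lift_perm i (s i) (unlift_perm i s) = s.
Proof.
apply/permP=> k; case: (unliftP i k) => [k'|] ->; rewrite ?lift_perm_id //.
by rewrite lift_perm_lift permE lift_unlift_perm_fun.
Qed.

Lemma lift_permKV i j t : unlift_perm i (lift_perm i j t) = t.
Proof.
by apply/permP=> k; rewrite permE /unlift_perm_fun lift_perm_lift lift_perm_id liftK.
Qed.

Lemma sum_lift_perm (R : nmodType) i (F : 'S_n.+1 -> R) :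
  (\sum_s F s = \sum_j \sum_t F (lift_perm i j t))%R.
Proof.
rewrite (partition_big (fun s => s i) xpredT) //; apply: eq_bigr => j _.
rewrite (reindex (lift_perm i j)).
  by apply: eq_bigl => t; rewrite lift_perm_id eqxx.
exists (unlift_perm i) => [t _ | s /eqP <-]; first exact: lift_permKV.
exact: unlift_permK.
Qed.

End UnliftPerm.

Definition ends_desc (w : seq nat) : bool := nth 0 w (size w - 1) < nth 0 w (size w - 2).

Lemma uniq_window (w : seq nat) i : uniq w -> i.+2 < size w ->
  uniq [:: nth 0 w i; nth 0 w i.+1; nth 0 w i.+2].
Proof.
move=> uw lti; have lti1 := ltnW lti; have lti0 := ltnW lti1.
by rewrite /= !inE !nth_uniq ?ltn_eqF.
Qed.

Section Avoider.
Variables (m : nat) (t : 'S_m).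
Hypothesis avt : avoids_all (word t) Pi.

Lemma mem_word_max : 0 < m -> m.-1 \in word t.
Proof. by move=> m0; rewrite (perm_mem (perm_word_iota t)) mem_iota; lia. Qed.

(* The maximum cannot be followed by two entries: that window would be 321 or 312. *)
Lemma avoider_max_index : m - 2 <= index m.-1 (word t).
Proof.
set p := index m.-1 (word t); case: (leqP (m - 2) p) => // ltp.
have max_p : nth 0 (word t) p = m.-1 by rewrite nth_index ?mem_word_max //; lia.
have ltp2 : p.+2 < size (word t) by rewrite size_word; lia.
have ltz : nth 0 (word t) p.+2 < m by apply: nth_word_ltn; lia.
have lty : nth 0 (word t) p.+1 < m by apply: nth_word_ltn; lia.
have := avoids_Pi_window avt ltp2; rewrite triple_okE ?uniq_window ?uniq_word //.
have := uniq_window (uniq_word t) ltp2; rewrite max_p /= !inE; lia.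
Qed.

Lemma avoider_max_last : 2 <= m ->
  nth 0 (word t) (if ends_desc (word t) then m - 2 else m - 1) = m.-1.
Proof.
move=> m2; have lep := avoider_max_index; set p := index m.-1 (word t) in lep.
have max_p : nth 0 (word t) p = m.-1 by rewrite nth_index ?mem_word_max //; lia.
have ltpm : p < m by rewrite -(size_word t) index_mem mem_word_max //; lia.
have lta : nth 0 (word t) (m - 2) < m by apply: nth_word_ltn; lia.
have ltb : nth 0 (word t) (m - 1) < m by apply: nth_word_ltn; lia.
have neq : nth 0 (word t) (m - 2) != nth 0 (word t) (m - 1).
  by rewrite nth_uniq ?size_word ?uniq_word //; lia.
rewrite /ends_desc size_word.
have [pE | pE] : p = m - 2 \/ p = m - 1 by lia.
- by rewrite pE in max_p; rewrite max_p in lta neq * ; rewrite ifT //; lia.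
- by rewrite pE in max_p; rewrite max_p in ltb neq * ; rewrite ifF //; lia.
Qed.

End Avoider.

Lemma ends_desc_avoider m (t : 'S_m) : 2 <= m -> avoids_all (word t) Pi ->
  ends_desc (word t) = (nth 0 (word t) (m - 1) != m.-1).
Proof.
move=> m2 avt; have := avoider_max_last avt m2.
case: ifP => // _ max_a; rewrite -max_a nth_uniq ?size_word ?uniq_word //; lia.
Qed.

Section Append.
Variables (m : nat) (t : 'S_m) (j : 'I_m.+1).
Hypothesis m2 : 2 <= m.
Let s := lift_perm ord_max j t.

Lemma triple_ok_append : avoids_all (word t) Pi ->
  triple_ok (bump j (nth 0 (word t) (m - 2))) (bump j (nth 0 (word t) (m - 1))) j =
  if ends_desc (word t) then j == m :> nat else j < m.
Proof.
move=> avt; have := avoider_max_last avt m2; rewrite /ends_desc size_word.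
set a := nth 0 _ (m - 2); set b := nth 0 _ (m - 1) => maxE.
have lta : a < m by apply: nth_word_ltn; lia.
have ltb : b < m by apply: nth_word_ltn; lia.
have neq : a != b by rewrite nth_uniq ?size_word ?uniq_word //; lia.
have lejm : j <= m by rewrite -ltnS.
rewrite triple_okE; last first.
  rewrite /= !inE (can_eq (bumpK j)) (negbTE neq) !(eq_sym _ (nat_of_ord j)).
  by rewrite !(negbTE (neq_bump _ _)).
have {}maxE : if b < a then a = m.-1 else b = m.-1 by case: ifP maxE.
move: maxE; rewrite /bump.
by case: (ltnP b a) => ? /= ->; case: (leqP j a) => ?; case: (leqP j b) => ? /=; lia.
Qed.

Lemma avoids_append : avoids_all (word s) Pi =
  avoids_all (word t) Pi && (if ends_desc (word t) then j == m :> nat else j < m).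
Proof.
rewrite /s word_lift avoids_Pi_rcons; rewrite size_map size_word //.
rewrite avoids_Pi_map ?(nth_map 0) ?size_word; try lia; last exact: ltn_bump.
by case avt: (avoids_all _ _) => //=; rewrite triple_ok_append.
Qed.

Lemma ends_desc_append : avoids_all (word s) Pi -> ends_desc (word s) = (j < m).
Proof.
move=> avs; rewrite (@ends_desc_avoider _ s) //; last by lia.
rewrite /s word_lift nth_rcons size_map size_word subn1 ltnn eqxx /=.
by rewrite ltn_neqAle -ltnS ltn_ord andbT.
Qed.

Lemma avoids_append_ends_desc b :
  avoids_all (word s) Pi && (ends_desc (word s) == b) =
  (if b then j < m else j == m :> nat) && avoids_all (word t) Pi && (ends_desc (word t) == ~~ b).
Proof.
have lejm : j <= m by rewrite -ltnS.
case avs: (avoids_all (word s) Pi).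
  rewrite ends_desc_append //; move: avs; rewrite avoids_append => /andP[-> ].
  by case: (ends_desc _); case: b => /=; lia.
move: avs; rewrite avoids_append.
by case: (avoids_all _ _) => //=; case: (ends_desc _); case: b => /=; lia.
Qed.

End Append.

Local Open Scope ring_scope.

Definition Iend (m : nat) (b : bool) : {poly int} :=
  \sum_(s : 'S_m | avoids_all (word s) Pi && (ends_desc (word s) == b)) 'X^(Defs.inv s).

Lemma I_Pi_Iend m : I_Pi m = Iend m true + Iend m false.
Proof.
rewrite /I_Pi (bigID (fun s : 'S_m => ends_desc (word s))).
by congr (_ + _); apply: eq_bigl => s; case: (ends_desc _); rewrite ?andbT ?andbF.
Qed.

Lemma I2_Iend m : (2 <= m)%N -> I2 m = Iend m true.
Proof.
move=> m2; rewrite /I2 /Iend; apply: eq_bigl => s; rewrite eqb_id.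
case avs: (avoids_all _ _) => //=; rewrite /last_run2.
have descE : ends_desc (word s) = (nth 0%N (word s) (m - 1) < nth 0%N (word s) (m - 2))%N.
  by rewrite /ends_desc size_word.
have := avoider_max_last avs m2; rewrite -descE.
case: ifP => // _ max_a; case: eqP => //= m3.
have ltc : (nth 0%N (word s) (m - 3) < m)%N by apply: nth_word_ltn; lia.
have : nth 0%N (word s) (m - 3) != nth 0%N (word s) (m - 2).
  by rewrite nth_uniq ?size_word ?uniq_word //; lia.
by rewrite max_a; lia.
Qed.

Lemma Iend_append m b : (2 <= m)%N ->
  Iend m.+1 b = \sum_(j < m.+1 | if b then (j < m)%N else j == m :> nat)
                   Iend m (~~ b) * 'X^(m - j).
Proof.
move=> m2; rewrite /Iend big_mkcond (sum_lift_perm ord_max) [RHS]big_mkcond.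
apply: eq_bigr => j _; case: ifP => cond.
  rewrite big_distrl [RHS]big_mkcond; apply: eq_bigr => t _.
  by rewrite avoids_append_ends_desc // cond inv_lift exprD; case: ifP; rewrite ?mul0r.
by apply: big1 => t _; rewrite avoids_append_ends_desc // cond.
Qed.

Lemma Iend_desc_rec m : (2 <= m)%N ->
  Iend m.+1 true = Iend m false * \sum_(1 <= k < m.+1) 'X^k.
Proof.
move=> m2; rewrite Iend_append // big_mkcond big_ord_recr /= ltnn addr0 mulr_sumr.
rewrite big_add1 /= big_mkord (reindex_inj rev_ord_inj) /=.
apply: eq_bigr => i _; have ltim := ltn_ord i.
by rewrite subKn // ifT // -subSn // subSS leq_subr.
Qed.

Lemma Iend_asc_rec m : (2 <= m)%N -> Iend m.+1 false = Iend m true.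
Proof.
move=> m2; rewrite Iend_append // big_mkcond big_ord_recr /= eqxx subnn mulr1.
by rewrite big1 ?add0r // => i _; rewrite ltn_eqF.
Qed.

Lemma word_S1 (t : 'S_1) : word t = [:: 0%N].
Proof.
have := size_word t; have := nth_word_ltn t (ltn0Sn 0).
by case: (word t) => [|x [|]] //=; rewrite ltnS leqn0 => /eqP ->.
Qed.

Lemma sum_S1 (R : nmodType) (F : 'S_1 -> R) : \sum_t F t = F 1%g.
Proof. by apply: big_pred1 => t; apply/esym/eqP/permP => i; rewrite !ord1. Qed.

Lemma Iend2 b : Iend 2 b = if b then 'X else 1.
Proof.
rewrite /Iend big_mkcond (sum_lift_perm ord_max) !big_ord_recr big_ord0 !sum_S1.
rewrite !inv_lift /Defs.inv !word_lift !word_S1 inv_w_cons /inv_w big_ord0 !avoids_PiE.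
by case: b; rewrite /= !add0r ?addr0.
Qed.

Theorem mainTheorem12 :
  I2 2 = 'X /\
  I2 3 = 'X + 'X^2 /\
  (forall n : nat, (4 <= n)%N ->
     I2 n = (\sum_(1 <= k < n) 'X^k) * I2 (n - 2)) /\
  (forall n : nat, (3 <= n)%N -> I_Pi n = I2 (n - 1) + I2 n) /\
  (forall n : nat, (4 <= n)%N ->
     I_Pi n = I2 (n - 1) + (\sum_(1 <= k < n) 'X^k) * I2 (n - 2)).
Proof.
have I2_rec (n : nat) : (4 <= n)%N -> I2 n = (\sum_(1 <= k < n) 'X^k) * I2 (n - 2).
  case: n => [|[|m]] // m2; rewrite !subSS subn0 mulrC.
  by rewrite !I2_Iend ?Iend_desc_rec ?Iend_asc_rec //; lia.
have I_Pi_I2 (n : nat) : (3 <= n)%N -> I_Pi n = I2 (n - 1) + I2 n.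
  case: n => [|m] // m2; rewrite I_Pi_Iend Iend_asc_rec ?subn1 ?I2_Iend //; try lia.
  exact: addrC.
split; first by rewrite I2_Iend // Iend2.
split.
  by rewrite I2_Iend // Iend_desc_rec // Iend2 mul1r big_ltn // big_nat1 expr1.
split; first exact: I2_rec.
split; first exact: I_Pi_I2.
by move=> n n4; rewrite I_Pi_I2 ?(I2_rec n n4) //; lia.
Qed.
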